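(* Let $X$ be a metric space and let $F: X \Rightarrow \mathbb{R}^m$ be a (total) multi-valued function such that $F(x)$ is closed for every $x \in X$. Then: (a) the set of points of continuity of $F$ is a $\Sigma^0_3$ subset of $X$; (b) if moreover $F(x)$ is bounded for every $x\in X$, then the set of points of continuity of $F$ is a $\Pi^0_2$ subset of $X$.
   Context: A multi-valued function $F: X \Rightarrow Y$ assigns to each $x$ a set $F(x)\subseteq Y$; all multi-valued functions are total ($F(x)\ne\emptyset$). For metric spaces $(X,p),(Y,d)$, $F$ is continuous at $x$ if there is some $y \in F(x)$ such that for every $\varepsilon>0$ there is $\delta>0$ such that for every $x' \in B_p(x,\delta)$ there is $y' \in F(x')$ with $d(y,y')<\varepsilon$. $\mathbb{R}^m$ carries its usual metric. Borel hierarchy: $\Sigma^0_1$ = open; $\Sigma^0_{n+1}$ = countable unions of sets whose complements are $\Sigma^0_k$ for some $k\le n$; $\Pi^0_n$ = complements of $\Sigma^0_n$ sets ($\Pi^0_2 = G_\delta$, $\Sigma^0_3$ = countable unions of $G_\delta$ sets). *)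

From HB Require Import structures.
From mathcomp Require Import all_boot all_order all_algebra.
From mathcomp Require Import boolp classical_sets reals.
Set Implicit Arguments. Unset Strict Implicit. Unset Printing Implicit Defensive.
Import Order.TTheory GRing.Theory Num.Theory.
Local Open Scope ring_scope.
Local Open Scope classical_set_scope.

Section Defs.
Variable R : realType.

Definition is_metric (X : Type) (d : X -> X -> R) : Prop :=
  (forall x y, 0 <= d x y) /\
  (forall x y, d x y = 0 <-> x = y) /\
  (forall x y, d x y = d y x) /\
  (forall x y z, d x z <= d x y + d y z).

Definition mball (X : Type) (d : X -> X -> R) (x : X) (r : R) : set X :=
  [set y | d x y < r].

Definition mopen (X : Type) (d : X -> X -> R) (A : set X) : Prop :=
  forall x, A x -> exists2 r : R, 0 < r & mball d x r `<=` A.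

Definition mclosed (X : Type) (d : X -> X -> R) (A : set X) : Prop :=
  mopen d (~` A).

Definition mbounded (X : Type) (d : X -> X -> R) (A : set X) : Prop :=
  exists x0 : X, exists M : R, forall y, A y -> d x0 y <= M.

Definition euclid (m : nat) (u v : 'rV[R]_m) : R :=
  Num.sqrt (\sum_(i < m) (u ord0 i - v ord0 i) ^+ 2).

(** Borel hierarchy: [Sigma0 d n A] means A is Sigma^0_n (n >= 1). *)
Inductive Sigma0 (X : Type) (d : X -> X -> R) : nat -> set X -> Prop :=
| Sigma0_open (A : set X) : mopen d A -> Sigma0 d 1 A
| Sigma0_succ (n : nat) (A : set X) (B : nat -> set X) :
    (1 <= n)%N ->
    A = \bigcup_(i in [set: nat]) B i ->
    (forall i, exists k : nat, [/\ (1 <= k)%N, (k <= n)%N & Sigma0 d k (~` B i)]) ->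
    Sigma0 d n.+1 A.

Definition Pi0 (X : Type) (d : X -> X -> R) (n : nat) (A : set X) : Prop :=
  Sigma0 d n (~` A).

Definition mv_continuous_at (X Y : Type) (p : X -> X -> R) (dY : Y -> Y -> R)
  (F : X -> set Y) (x : X) : Prop :=
  exists2 y : Y, F x y &
    forall eps : R, 0 < eps -> exists2 delta : R, 0 < delta &
      forall x', p x x' < delta -> exists2 y' : Y, F x' y' & dY y y' < eps.

End Defs.

(** Say that y is approached within r by F near x when F x' meets the r-ball
    around y for every x' close enough to x.  Since F x is closed, F is
    continuous at x iff some y is approached within every r > 0, and for
    fixed r and a fixed set Q of candidates the points x near which some y in
    Q is approached within r form an open set.  By compactness, if for every
    r = 1/(n+1) a candidate can be found in one fixed box, a cluster point of
    these candidates is approached within every r.  So the continuity set is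
    the union over N of the G_delta sets obtained with candidates in the cube
    [-N, N]^m; when the values are bounded, every candidate already lies in a
    box depending only on x, and the continuity set is a single G_delta. *)
From HB Require Import structures.
From mathcomp Require Import all_boot all_order all_algebra.
From mathcomp Require Import all_classical all_reals all_analysis.
From mathcomp Require Import zify ring.
Set Implicit Arguments.
Unset Strict Implicit.
Unset Printing Implicit Defensive.

Import Order.TTheory GRing.Theory Num.Theory.
Import numFieldNormedType.Exports.
Local Open Scope ring_scope.
Local Open Scope classical_set_scope.

Section BorelHierarchy.
Variables (R : realType) (X : Type) (d : X -> X -> R).

Lemma Sigma0_bigcup_Pi0 n (B : nat -> set X) :
  (1 <= n)%N -> (forall i, Pi0 d n (B i)) ->
  Sigma0 d n.+1 (\bigcup_(i in [set: nat]) B i).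
Proof.
move=> n_gt0 PiB; apply: (Sigma0_succ n_gt0 erefl) => i.
by exists n; split; last exact: PiB.
Qed.

Lemma Pi0_bigcap_Sigma0 n (B : nat -> set X) :
  (1 <= n)%N -> (forall i, Sigma0 d n (B i)) ->
  Pi0 d n.+1 (\bigcap_(i in [set: nat]) B i).
Proof.
move=> n_gt0 SigmaB; rewrite /Pi0 setC_bigcap.
by apply: Sigma0_bigcup_Pi0 => // i; rewrite /Pi0 setCK.
Qed.

Lemma Pi0_bigcap_open (B : nat -> set X) :
  (forall i, mopen d (B i)) -> Pi0 d 2 (\bigcap_(i in [set: nat]) B i).
Proof. by move=> openB; apply: Pi0_bigcap_Sigma0 => // i; apply: Sigma0_open. Qed.

End BorelHierarchy.

Section EuclideanDistance.
Variables (R : realType) (m : nat).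
Implicit Types (u v : 'rV[R]_m) (lo hi : 'I_m -> R).

Lemma euclid_coord_le u v i : `|u ord0 i - v ord0 i| <= euclid u v.
Proof.
rewrite /euclid -sqrtr_sqr ler_sqrt; last by apply: sumr_ge0 => j _; apply: sqr_ge0.
by rewrite (bigD1 i) //= lerDl; apply: sumr_ge0 => j _; apply: sqr_ge0.
Qed.

Lemma euclid_le_coord u v t :
  0 <= t -> (forall i, `|u ord0 i - v ord0 i| <= t) -> euclid u v <= t * m%:R.
Proof.
move=> t_ge0 uv_le; rewrite /euclid -[t * _]ger0_norm ?mulr_ge0 //.
rewrite -sqrtr_sqr ler_sqrt ?sqr_ge0 //.
apply: (@le_trans _ _ (\sum_(i < m) t ^+ 2)).
  apply: ler_sum => i _; rewrite -real_normK ?num_real //.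
  by rewrite lerXn2r ?nnegrE ?normr_ge0.
rewrite sumr_const card_ord -[_ *+ m]mulr_natr exprMn ler_wpM2l ?sqr_ge0 //.
by rewrite -natrX ler_nat; nia.
Qed.

Definition in_box lo hi : set 'rV[R]_m :=
  [set v | forall i, lo i <= v ord0 i <= hi i].

Lemma compact_in_box lo hi : compact (in_box lo hi).
Proof.
have -> : in_box lo hi = [set v | forall i, `[lo i, hi i]%classic (v ord0 i)].
  by apply/seteqP; split => v /= v_in i; move: (v_in i); rewrite /= in_itv.
apply: (@rV_compact _ _ (fun i => `[lo i, hi i]%classic)) => i.
exact: segment_compact.
Qed.

Lemma box_cluster lo hi (S : nat -> set 'rV[R]_m) :
  (forall n k, (n <= k)%N -> S k `<=` S n) ->
  (forall n, S n !=set0) -> (forall n, S n `<=` in_box lo hi) ->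
  exists y : 'rV[R]_m, forall n c, 0 < c ->
    exists2 z, S n z & forall i, `|y ord0 i - z ord0 i| < c.
Proof.
move=> S_decr S_neq0 S_box.
have S_filter : ProperFilter (filter_from setT S).
  apply: filter_from_proper => [|n _]; last exact: S_neq0.
  apply: filter_fromT_filter; first by exists 0%N.
  move=> i j; exists (maxn i j) => y Sy.
  by split; [apply: (S_decr i) Sy; rewrite leq_maxl
             |apply: (S_decr j) Sy; rewrite leq_maxr].
have [|y [_ y_cluster]] := @compact_in_box lo hi _ S_filter; first by exists 0%N.
exists y => n c c_gt0.
have Sn_in : filter_from setT S (S n) by exists n.
have [z [Snz /= [_ /(_ ord0) yz]]] := y_cluster _ _ Sn_in (nbhsx_ballx y c c_gt0).
by exists z.
Qed.

Definition cube (N : nat) : set 'rV[R]_m := in_box (fun=> - N%:R) (fun=> N%:R).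

End EuclideanDistance.

Section MultiValued.
Variables (R : realType) (X : Type) (p : X -> X -> R) (m : nat).
Variable F : X -> set 'rV[R]_m.
Hypothesis p_metric : is_metric p.

Definition approached_near (y : 'rV[R]_m) (r : R) (x : X) : Prop :=
  exists2 delta : R, 0 < delta &
    forall x', p x x' < delta -> exists2 w, F x' w & euclid y w < r.

Definition approached_in (Q : set 'rV[R]_m) (r : R) : set X :=
  [set x | exists2 y, Q y & approached_near y r x].

Lemma approached_near_le y r r' x :
  r <= r' -> approached_near y r x -> approached_near y r' x.
Proof.
move=> r_le [delta delta_gt0 near_y]; exists delta => // x' /near_y [w Fw yw].
by exists w => //; apply: lt_le_trans r_le.
Qed.

Lemma approached_near_value y r x :
  approached_near y r x -> exists2 w, F x w & euclid y w < r.
Proof.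
have [_ [pE _]] := p_metric.
by move=> [delta delta_gt0]; apply; rewrite (proj2 (pE x x) erefl).
Qed.

Lemma mopen_approached_in Q r : mopen p (approached_in Q r).
Proof.
have [_ [_ [_ p_triangle]]] := p_metric.
move=> x [y Qy [delta delta_gt0 near_y]]; exists delta => // x'' xx''.
exists y => //; exists (delta - p x x''); first by rewrite subr_gt0.
move=> x' x''x'; apply: near_y; apply: le_lt_trans (p_triangle x x'' x') _.
by rewrite -ltrBrDl.
Qed.

Lemma approached_near_mem y x :
  mclosed (@euclid R m) (F x) -> (forall r, 0 < r -> approached_near y r x) -> F x y.
Proof.
move=> Fx_closed y_approached; apply: contrapT => Fxy.
have [r r_gt0 ball_out] := Fx_closed y Fxy.
have [w Fxw yw] := approached_near_value (y_approached r r_gt0).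
exact: ball_out w yw Fxw.
Qed.

Lemma mv_continuous_atP x : mclosed (@euclid R m) (F x) ->
  mv_continuous_at p (@euclid R m) F x <->
  exists y, forall r, 0 < r -> approached_near y r x.
Proof.
move=> Fx_closed; split => [[y _ y_approached]|[y y_approached]]; first by exists y.
by exists y => //; apply: approached_near_mem.
Qed.

Lemma approached_cluster lo hi x :
  (forall n, approached_in (in_box lo hi) n.+1%:R^-1 x) ->
  exists y, forall r, 0 < r -> approached_near y r x.
Proof.
move=> approached.
pose S n := in_box lo hi `&` [set y | approached_near y n.+1%:R^-1 x].
have [n k nk y [y_box y_approached]|n|n y []//|y y_cluster] := @box_cluster _ _ lo hi S.
- split => //; apply: approached_near_le y_approached.
  by rewrite lef_pV2 ?posrE // ler_nat.
- by have [y ? ?] := approached n; exists y.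
exists y => r r_gt0.
pose c := r / 2 / m.+1%:R.
have c_gt0 : 0 < c by rewrite !divr_gt0.
have [n n_lt] := ltr_add_invr c_gt0; rewrite add0r in n_lt.
have [z [_ [delta delta_gt0 near_z]] yz] := y_cluster n c c_gt0.
exists delta => // x' /near_z [w Fw zw]; exists w => //.
apply: (le_lt_trans (euclid_le_coord (t := c + c) _ _)).
- by rewrite addr_ge0 // ltW.
- move=> i; rewrite -(subrK (z ord0 i) (y ord0 i)) -addrA.
  rewrite (le_trans (ler_normD _ _)) // lerD //; first exact: ltW.
  exact: ltW (le_lt_trans (euclid_coord_le z w i) (lt_trans zw n_lt)).
- have -> : (c + c) * m%:R = r * (m%:R / m.+1%:R) by rewrite /c; field.
  by rewrite -[ltRHS]mulr1 ltr_pM2l // ltr_pdivrMr // mul1r ltr_nat.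
Qed.

Lemma mv_continuous_set_cubes : (forall x, mclosed (@euclid R m) (F x)) ->
  [set x | mv_continuous_at p (@euclid R m) F x] =
  \bigcup_(N in [set: nat]) \bigcap_(n in [set: nat])
    approached_in (cube N) n.+1%:R^-1.
Proof.
move=> F_closed; apply/seteqP; split => x /=.
- move=> /(mv_continuous_atP (F_closed x)) [y y_approached].
  have norm1_ge0 : 0 <= \sum_i `|y ord0 i| by apply: sumr_ge0.
  exists (Num.Def.archi_bound (\sum_i `|y ord0 i|)) => // n _.
  exists y; last exact: y_approached.
  move=> i; rewrite -ler_norml; apply: ltW; apply: le_lt_trans (archi_boundP norm1_ge0).
  by rewrite (bigD1 i) //= lerDl; apply: sumr_ge0.
- move=> [N _ approached]; apply/(mv_continuous_atP (F_closed x)).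
  by apply: approached_cluster => n; apply: approached.
Qed.

Lemma mv_continuous_set_bounded :
  (forall x, mclosed (@euclid R m) (F x)) -> (forall x, mbounded (@euclid R m) (F x)) ->
  [set x | mv_continuous_at p (@euclid R m) F x] =
  \bigcap_(n in [set: nat]) approached_in setT n.+1%:R^-1.
Proof.
move=> F_closed F_bounded; apply/seteqP; split => x /=.
  move=> /(mv_continuous_atP (F_closed x)) [y y_approached] n _.
  by exists y => //; apply: y_approached.
move=> approached; apply/(mv_continuous_atP (F_closed x)).
have [x0 [M x0_bound]] := F_bounded x.
apply: (@approached_cluster (fun i => x0 ord0 i - (1 + M))
                            (fun i => x0 ord0 i + (1 + M))) => n.
have [y _ y_approached] := approached n I; exists y => // i.
have [w Fxw yw] := approached_near_value y_approached.
rewrite -ler_distlC -(subrK (w ord0 i) (x0 ord0 i)) -addrA.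
rewrite (le_trans (ler_normD _ _)) // [1 + M]addrC lerD //.
  exact: le_trans (euclid_coord_le x0 w i) (x0_bound w Fxw).
rewrite distrC (le_trans (euclid_coord_le y w i)) // ltW // (lt_le_trans yw) //.
by rewrite invr_le1 ?ler1n ?unitfE ?pnatr_eq0.
Qed.

End MultiValued.

Theorem corollary2p2 (R : realType) (X : Type) (p : X -> X -> R) (m : nat)
  (F : X -> set 'rV[R]_m) :
  is_metric p ->
  (forall x, F x !=set0) ->
  (forall x, mclosed (@euclid R m) (F x)) ->
  Sigma0 p 3 [set x | mv_continuous_at p (@euclid R m) F x] /\
  ((forall x, mbounded (@euclid R m) (F x)) ->
   Pi0 p 2 [set x | mv_continuous_at p (@euclid R m) F x]).
Proof.
move=> p_metric _ F_closed; split => [|F_bounded].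
- rewrite (mv_continuous_set_cubes p_metric F_closed).
  apply: Sigma0_bigcup_Pi0 => // N; apply: Pi0_bigcap_open => n.
  exact: mopen_approached_in.
- rewrite (mv_continuous_set_bounded p_metric F_closed F_bounded).
  by apply: Pi0_bigcap_open => n; apply: mopen_approached_in.
Qed.
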